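(* Let $(X,d)$ be a metric space, $f:X\to X$ a Borel measurable map and $\mu$ a Borel probability measure on $X$. Then $\mu$ is an expansive measure of $f$ (i.e., there is $\delta>0$ with $\mu(\Phi_\delta(x))=0$ for all $x\in X$) if and only if there is $\delta>0$ such that $\mu(\Phi_\delta(x))=0$ for $\mu$-almost every $x\in X$.
   Context: Here $\Phi_\delta(x)=\{y\in X: d(f^i(y),f^i(x))\le\delta \text{ for all } i\in\mathbb{N}\}$, $\mathbb{N}=\{0,1,2,\dots\}$. *)

From HB Require Import structures.
From mathcomp Require Import all_boot all_order all_algebra.
From mathcomp Require Import all_classical all_reals all_analysis.
Set Implicit Arguments. Unset Strict Implicit. Unset Printing Implicit Defensive.
Import Order.TTheory GRing.Theory Num.Theory.
Local Open Scope classical_set_scope.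
Local Open Scope ring_scope.

Definition is_metric {R : realType} {T : Type} (dist : T -> T -> R) : Prop :=
  [/\ (forall x y, 0 <= dist x y),
      (forall x y, dist x y = 0 <-> x = y),
      (forall x y, dist x y = dist y x) &
      (forall x y z, dist x z <= dist x y + dist y z)].

Definition metric_open {R : realType} {T : Type} (dist : T -> T -> R) (U : set T) : Prop :=
  forall x, U x -> exists2 e : R, 0 < e & [set y | dist x y < e] `<=` U.

Definition Phi {R : realType} {T : Type} (dist : T -> T -> R) (f : T -> T)
  (delta : R) (x : T) : set T :=
  [set y | forall i : nat, dist (iter i f y) (iter i f x) <= delta].

Definition expansive_measure {R : realType} {dT : measure_display}
  {T : measurableType dT} (dist : T -> T -> R) (f : T -> T)
  (mu : {measure set T -> \bar R}) : Prop :=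
  exists2 delta : R, 0 < delta & forall x, mu (Phi dist f delta x) = 0%E.

From HB Require Import structures.
From mathcomp Require Import all_boot all_order all_algebra.
From mathcomp Require Import all_classical all_reals all_analysis.
From mathcomp Require Import lra.
Set Implicit Arguments.
Unset Strict Implicit.
Unset Printing Implicit Defensive.
Import Order.TTheory GRing.Theory Num.Theory.
Local Open Scope classical_set_scope.
Local Open Scope ring_scope.

(** By the triangle inequality, any [y] in [Phi (delta/2) x] satisfies
    [Phi (delta/2) x `<=` Phi delta y].  So if [Phi delta y] is null for
    almost every [y], then each [Phi (delta/2) x] either meets a point [y]
    with [Phi delta y] null, and is null itself, or lies inside the
    exceptional null set. *)

Section Phi_metric.
Variables (R : realType) (T : Type) (dist : T -> T -> R) (f : T -> T).
Hypothesis dist_sym : forall x y, dist x y = dist y x.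
Hypothesis dist_triangle : forall x y z, dist x z <= dist x y + dist y z.

Lemma Phi_half_sub (delta : R) (x y : T) :
  Phi dist f (delta / 2) x y ->
  Phi dist f (delta / 2) x `<=` Phi dist f delta y.
Proof.
move=> Pxy z Pxz i; apply: le_trans (dist_triangle _ (iter i f x) _) _.
by rewrite (dist_sym (iter i f x)) [delta](splitr delta) lerD.
Qed.

Lemma metric_open_dist_gt (c : T) (r : R) :
  metric_open dist [set y | r < dist y c].
Proof.
move=> y /= ry; exists (dist y c - r); first by rewrite subr_gt0.
by move=> z /=; have := dist_triangle y z c; lra.
Qed.

End Phi_metric.

Lemma measurable_fun_iter d (T : measurableType d) (f : T -> T) (n : nat) :
  measurable_fun setT f -> measurable_fun setT (iter n f).
Proof.
move=> mf; elim: n => [|n IHn] /=; first exact: measurable_id.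
exact: measurableT_comp.
Qed.

Section Phi_measurable.
Variables (R : realType) (d : measure_display) (T : measurableType d).
Variables (dist : T -> T -> R) (f : T -> T).
Hypothesis dist_triangle : forall x y z, dist x z <= dist x y + dist y z.
Hypothesis measurable_open : @measurable d T = <<s metric_open dist >>.
Hypothesis mf : measurable_fun setT f.

Lemma measurable_closed_ball (c : T) (r : R) :
  measurable [set y | dist y c <= r].
Proof.
have -> : [set y | dist y c <= r] = ~` [set y | r < dist y c].
  by apply/seteqP; split => y /=; rewrite leNgt => /negP.
apply: measurableC; rewrite measurable_open; apply: sub_gen_smallest.
exact: metric_open_dist_gt.
Qed.

Lemma measurable_Phi (r : R) (x : T) : measurable (Phi dist f r x).
Proof.
have -> : Phi dist f r x =
    \bigcap_i (iter i f @^-1` [set y | dist y (iter i f x) <= r]).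
  by apply/seteqP; split => y /= Py i => [_|]; apply: Py.
apply: bigcapT_measurable => i; rewrite -[X in measurable X]setTI.
by apply: measurable_fun_iter => //; exact: measurable_closed_ball.
Qed.

End Phi_measurable.

Lemma Phi_half_null (R : realType) d (T : measurableType d)
    (dist : T -> T -> R) (f : T -> T) (mu : {measure set T -> \bar R})
    (delta : R) :
  (forall x y, dist x y = dist y x) ->
  (forall x y z, dist x z <= dist x y + dist y z) ->
  (forall r x, measurable (Phi dist f r x)) ->
  {ae mu, forall y, mu (Phi dist f delta y) = 0%E} ->
  forall x, mu (Phi dist f (delta / 2) x) = 0%E.
Proof.
move=> dist_sym dist_triangle mPhi [N [mN muN bad_sub]] x.
apply/negligibleP => //.
have [[y Pxy Ny]|] := pselect (exists2 y, Phi dist f (delta / 2) x y & ~ N y).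
  have muy : mu (Phi dist f delta y) = 0%E.
    by apply: contra_notP Ny; exact: bad_sub.
  apply: negligibleS (Phi_half_sub dist_sym dist_triangle Pxy) _.
  exact/negligibleP.
move=> noy; apply: negligibleS (_ : _ `<=` N) _; last exact/negligibleP.
by move=> z Pxz; apply: contrapT => Nz; apply: noy; exists z.
Qed.

Theorem lemma2p3 (R : realType) (dT : measure_display) (T : measurableType dT)
  (dist : T -> T -> R)
  (hmetric : is_metric dist)
  (hborel : @measurable dT T = <<s metric_open dist >>)
  (f : T -> T) (hf : measurable_fun setT f)
  (mu : probability T R) :
  expansive_measure dist f mu <->
  exists2 delta : R, 0 < delta &
    {ae mu, forall x, mu (Phi dist f delta x) = 0%E}.
Proof.
case: hmetric => _ _ dist_sym dist_triangle.
split=> [[delta delta_gt0 null_Phi]|[delta delta_gt0 ae_null_Phi]].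
  by exists delta => //; apply: aeW.
exists (delta / 2); first by rewrite divr_gt0.
apply: Phi_half_null ae_null_Phi => // r x.
exact: measurable_Phi.
Qed.
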